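(* Let $n$ be a positive integer, $b_0,\dots,b_{n-1},\beta_0,\dots,\beta_{n-1}\in\mathbb R$, and \[ \widetilde\Delta(z)=z^n+\sum_{k=0}^{n-1}b_kz^k+e^{-z}\sum_{k=0}^{n-1}\beta_kz^k,\quad z\in\mathbb C. \] Then $0$ is a root of multiplicity $2n$ of $\widetilde\Delta$ if and only if, for every $k\in\{0,\dots,n-1\}$, \[ b_k=(-1)^{n-k}\frac{n!}{k!}\binom{2n-k-1}{n-1},\qquad \beta_k=(-1)^{n-1}\frac{(2n-k-1)!}{k!\,(n-k-1)!}. \]
   Context: A root $z_0$ of $\widetilde\Delta$ has multiplicity $2n$ when $\widetilde\Delta^{(k)}(z_0)=0$ for $k=0,\dots,2n-1$ (multiplicity can be at most $2n$ for this quasipolynomial). *)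

From HB Require Import structures.
From mathcomp Require Import all_boot all_order all_algebra.
From mathcomp Require Import all_classical all_reals all_analysis.
From mathcomp Require Import complex.
Set Implicit Arguments. Unset Strict Implicit. Unset Printing Implicit Defensive.
Import Order.TTheory GRing.Theory Num.Theory.
Import numFieldNormedType.Exports.
Local Open Scope ring_scope.
Local Open Scope complex_scope.

Definition cexp (R : realType) (z : R[i]) : R[i] :=
  (expR (@complex.Re R z))%:C * ((cos (@complex.Im R z))%:C + 'i * (sin (@complex.Im R z))%:C).

Definition Deltat (R : realType) (n : nat) (b beta : nat -> R) (z : R[i]) : R[i] :=
  z ^+ n + \sum_(k < n) (b k)%:C * z ^+ k
  + cexp (- z) * \sum_(k < n) (beta k)%:C * z ^+ k.

(* z0 is a root of f of multiplicity (at least) m: the complex derivatives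
   f^(k)(z0) vanish for k = 0, ..., m-1.  derive1n is the iterated complex
   derivative (limit of difference quotients over h in R[i]). *)
Definition root_of_mult (K : numFieldType) (f : K -> K) (z0 : K) (m : nat) : Prop :=
  forall k : nat, (k < m)%N -> derive1n k f z0 = 0.

(* Write Deltat(z) = P(z) + e^{-z} Q(z) with P = z^n + sum_k b_k z^k and
   Q = sum_k beta_k z^k.  Since (e^{-z} q)' = e^{-z} (q' - q), the m-th
   derivative at 0 is m! p_m + (D^m a)(0), where p_m are the coefficients of P,
   a_j = j! beta_j and D is the forward difference operator on sequences.
   For n <= m < 2n the coefficient p_m = [m = n] is known, and these n equations
   determine the sequence a, which vanishes from n on; the solution is
   a_j = (-1)^(n-1) n! C(2n-1-j, n), because the m-th difference of
   j |-> C(N-j, n) is (-1)^m C(N-m-j, n-m).  The equations with m < n then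
   determine b_m.  The complex derivative of e^{-z} comes from the estimate
   |e^h - 1 - h| <= 4 |h|^2 for |h| <= 1/2. *)

From HB Require Import structures.
From mathcomp Require Import all_boot all_order all_algebra.
From mathcomp Require Import all_classical all_reals all_analysis.
From mathcomp Require Import complex.
From mathcomp Require Import ring lra zify.
Import Order.TTheory GRing.Theory Num.Theory.
Import numFieldNormedType.Exports.
Local Open Scope ring_scope.

Section ForwardDifferences.
Context {V : zmodType}.
Implicit Types a e : nat -> V.

Definition fwd_diff a i := a i.+1 - a i.
Definition fwd_diffn k a := iter k fwd_diff a.

Lemma fwd_diffnS k a i :
  fwd_diffn k.+1 a i = fwd_diffn k a i.+1 - fwd_diffn k a i.
Proof. by []. Qed.

Lemma fwd_diffnSr k a : fwd_diffn k.+1 a = fwd_diffn k (fwd_diff a).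
Proof. exact: iterSr. Qed.

Lemma fwd_diffnB k a e i :
  fwd_diffn k (fun j => a j - e j) i = fwd_diffn k a i - fwd_diffn k e i.
Proof.
elim: k i => [//|k IH] i.
by rewrite !fwd_diffnS !IH !opprD !opprK addrACA.
Qed.

Lemma fwd_diffn_eq0_ge n a : (forall i, (n <= i)%N -> a i = 0) ->
  forall k i, (n <= i)%N -> fwd_diffn k a i = 0.
Proof.
move=> a_ge; elim=> [|k IH] i le_ni; first exact: a_ge.
by rewrite fwd_diffnS !IH ?subr0 // (leq_trans le_ni).
Qed.

Lemma eq0_fwd_diffn0_lt n e : (forall k, (k < n)%N -> fwd_diffn k e 0 = 0) ->
  forall j, (j < n)%N -> e j = 0.
Proof.
elim: n e => [//|n IH] e diff0.
have de0 : forall j, (j < n)%N -> fwd_diff e j = 0.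
  by apply: IH => k lt_kn; rewrite -fwd_diffnSr; exact: diff0.
elim=> [_|j IHj lt_jn]; first exact: (diff0 0%N).
by move: (de0 j lt_jn); rewrite /fwd_diff IHj ?(ltnW lt_jn) // subr0.
Qed.

Lemma eq0_fwd_diffn_eq0 n k a : (forall i, (n <= i)%N -> a i = 0) ->
  (forall i, fwd_diffn k a i = 0) -> forall i, a i = 0.
Proof.
elim: k a => [//|k IH] a a_ge; rewrite fwd_diffnSr => /IH da0.
have {}da0 : forall i, fwd_diff a i = 0.
  by apply: da0 => i le_ni; rewrite /fwd_diff !a_ge ?subr0 // ltnW.
have a_shift i m : a (i + m)%N = a i.
  elim: m => [|m IHm]; first by rewrite addn0.
  by rewrite addnS -[RHS]IHm; apply/eqP; rewrite -subr_eq0; apply/eqP/da0.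
by move=> i; rewrite -(a_shift i n) a_ge // leq_addl.
Qed.

Lemma eq0_fwd_diffn0_window n a : (forall i, (n <= i)%N -> a i = 0) ->
  (forall m, (n <= m < 2 * n)%N -> fwd_diffn m a 0 = 0) -> forall i, a i = 0.
Proof.
move=> a_ge diff0; apply: (eq0_fwd_diffn_eq0 n n) => // i.
have [lt_in|le_ni] := ltnP i n; last exact: fwd_diffn_eq0_ge a_ge _ _ le_ni.
apply: (eq0_fwd_diffn0_lt n) lt_in => k lt_kn.
rewrite /fwd_diffn -iterD; apply: diff0; lia.
Qed.

End ForwardDifferences.

Section ForwardDifferencesRing.
Context {R : pzRingType}.

Lemma fwd_diffnMl k (c : R) a i :
  fwd_diffn k (fun j => c * a j) i = c * fwd_diffn k a i.
Proof. by elim: k i => [//|k IH] i; rewrite !fwd_diffnS !IH mulrBr. Qed.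

Lemma fwd_diffn_binom N n m i : (i + m <= N)%N ->
  fwd_diffn m (fun j => 'C(N - j, n)%:R : R) i =
  if (m <= n)%N then (-1) ^+ m * 'C(N - m - i, n - m)%:R else 0.
Proof.
elim: m i => [|m IH] i le_N; first by rewrite mul1r !subn0.
rewrite fwd_diffnS !IH; [|lia|lia].
case: (ltngtP m n) => [lt_mn|lt_nm|<-]; last by rewrite !subnn !bin0 subrr.
- have -> : (N - m - i = (N - m.+1 - i).+1)%N by lia.
  have -> : (n - m = (n - m.+1).+1)%N by lia.
  have -> : (N - m - i.+1 = N - m.+1 - i)%N by lia.
  by rewrite binS natrD mulrDr opprD addrA subrr sub0r exprS mulN1r mulNr.
- by rewrite subrr.
Qed.

End ForwardDifferencesRing.

Section MaximalMultiplicitySystem.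
Context {K : numFieldType}.
Variable n : nat.
Hypothesis n_gt0 : (0 < n)%N.

Definition bstar k : K :=
  (-1) ^+ (n - k) * ((n`!)%:R / (k`!)%:R) * ('C(2 * n - k - 1, n - 1))%:R.

Definition betastar k : K :=
  (-1) ^+ (n - 1) * ((2 * n - k - 1)`!)%:R / ((k`!)%:R * ((n - k - 1)`!)%:R).

Definition pstar m : K := if (m < n)%N then bstar m else (m == n)%:R.

Definition astar j : K := (-1) ^+ (n - 1) * (n`!)%:R * ('C(2 * n - 1 - j, n))%:R.

Definition maxmult_system (p a : nat -> K) :=
  forall m, (m < 2 * n)%N -> (m`!)%:R * p m + fwd_diffn m a 0 = 0.

Lemma natr_fact_neq0 k : (k`!)%:R != 0 :> K.
Proof. by rewrite pnatr_eq0 gtn_eqF ?fact_gt0. Qed.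

Lemma astar_ge j : (n <= j)%N -> astar j = 0.
Proof. by move=> le_nj; rewrite /astar bin_small ?mulr0 //; lia. Qed.

Lemma fact_betastar k : (k < n)%N -> (k`!)%:R * betastar k = astar k.
Proof.
move=> lt_kn; rewrite /betastar /astar.
have -> : ((2 * n - k - 1)`! = 'C(2 * n - 1 - k, n) * (n`! * (n - k - 1)`!))%N.
  have -> : (2 * n - k - 1 = 2 * n - 1 - k)%N by lia.
  have -> : (n - k - 1 = 2 * n - 1 - k - n)%N by lia.
  by rewrite bin_fact //; lia.
have := natr_fact_neq0 k; have := natr_fact_neq0 (n - k - 1).
rewrite !natrM; set u := (k`!)%:R; set v := ((n - k - 1)`!)%:R => v0 u0.
by field; rewrite u0 v0.
Qed.

Lemma fwd_diffn_astar m : (m < 2 * n)%N -> fwd_diffn m astar 0 =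
  (-1) ^+ (n - 1) * (n`!)%:R *
  (if (m <= n)%N then (-1) ^+ m * ('C(2 * n - 1 - m, n - m))%:R else 0).
Proof.
by move=> lt_m2n; rewrite fwd_diffnMl fwd_diffn_binom ?subn0 //; lia.
Qed.

Lemma pstar_lt k : (k < n)%N -> pstar k = bstar k.
Proof. by rewrite /pstar => ->. Qed.

Lemma maxmult_system_star : maxmult_system pstar astar.
Proof.
move=> m lt_m2n; rewrite fwd_diffn_astar // /pstar /bstar.
have sign_sqr k : (-1) ^+ k * (-1) ^+ k = 1 :> K.
  by rewrite -exprD addnn -mul2n exprM sqrrN !expr1n.
case: (ltngtP m n) => [lt_mn|lt_nm|eq_mn]; last first.
- rewrite eq_mn in lt_m2n *; rewrite subnn bin0 mulr1 mulr1.
  have -> : n = (n - 1).+1 by lia.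
  by rewrite subSS subn0 exprS mulN1r mulrN -mulrA mulrCA sign_sqr mulr1 subrr.
- by rewrite !mulr0 addr0.
- have [t def_n] : exists t, n = (m + t.+1)%N by exists (n - m).-1; lia.
  have -> : (n - m = t.+1)%N by lia.
  have -> : (n - 1 = m + t)%N by lia.
  have -> : (2 * n - 1 - m = 2 * n - m - 1)%N by lia.
  have -> : 'C(2 * n - m - 1, t.+1) = 'C(2 * n - m - 1, m + t).
    by rewrite -bin_sub; [congr 'C(_, _)|]; lia.
  have := natr_fact_neq0 m; rewrite exprD exprS.
  set f := (m`!)%:R; set s := (-1) ^+ m; set s' := (-1) ^+ t => f0.
  have ss : s * s = 1 by exact: sign_sqr.
  set c := ('C(_, _))%:R.
  rewrite (_ : s * s' * _ * (s * c) = (s * s) * (s' * (n`!)%:R * c));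
    last by ring.
  by rewrite ss; field.
Qed.

Lemma maxmult_system_iff (p beta : nat -> K) :
  (forall j, (n <= j)%N -> beta j = 0) ->
  (forall m, (n <= m)%N -> p m = (m == n)%:R) ->
  maxmult_system p (fun j => (j`!)%:R * beta j) <->
  (forall k, (k < n)%N -> p k = bstar k /\ beta k = betastar k).
Proof.
move=> beta_ge p_ge; set a := fun j => _; split=> [sys k lt_kn|coefs].
- have diff_eq m : (m < 2 * n)%N -> p m = pstar m ->
      fwd_diffn m a 0 = fwd_diffn m astar 0.
    move=> lt_m2n p_m; apply: (addrI ((m`!)%:R * p m)).
    by rewrite sys // p_m maxmult_system_star.
  have a_astar : a = astar.
    apply/funext => j; apply/eqP; rewrite -subr_eq0; apply/eqP; move: j.
    apply: (eq0_fwd_diffn0_window n) => [j le_nj|m /andP[le_nm lt_m2n]].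
      by rewrite /a beta_ge // astar_ge // mulr0 subrr.
    by rewrite fwd_diffnB diff_eq ?subrr // p_ge // /pstar ltnNge le_nm.
  have lt_k2n : (k < 2 * n)%N by lia.
  split.
  + apply: (mulfI (natr_fact_neq0 k)); apply: (addIr (fwd_diffn k a 0)).
    by rewrite sys // a_astar -(pstar_lt _ lt_kn) maxmult_system_star.
  + apply: (mulfI (natr_fact_neq0 k)).
    by rewrite fact_betastar // -a_astar.
- have -> : a = astar.
    apply/funext => j; have [lt_jn|le_nj] := ltnP j n.
      by rewrite /a (coefs j lt_jn).2 fact_betastar.
    by rewrite /a beta_ge // astar_ge // mulr0.
  have -> : p = pstar.
    apply/funext => m; rewrite /pstar; case: ltnP => [/coefs[]//|/p_ge//].
  exact: maxmult_system_star.
Qed.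

End MaximalMultiplicitySystem.

Section RealTaylorBounds.
Context {R : realType}.
Implicit Types x : R.

Lemma norm_sin_le x : `|sin x| <= `|x|.
Proof.
wlog x0 : x / 0 <= x.
  move=> W; have [/W//|/ltW x0] := leP 0 x.
  by rewrite -normrN -sinN -(normrN x) W // oppr_ge0.
have [c _] := @MVT_segment R sin cos 0 x x0
  (fun c _ => is_derive_sin c) (continuous_subspaceT (@continuous_sin R)).
by rewrite sin0 !subr0 => ->; rewrite normrM ler_piMl // cos_max.
Qed.

Lemma norm_cos_sub1_le x : `|cos x - 1| <= x ^+ 2 / 2.
Proof.
have cosE : cos x = 1 - 2 * sin (x / 2) ^+ 2.
  have {1}-> : x = (x / 2) *+ 2 by rewrite -mulr_natr divfK ?pnatr_eq0.
  by rewrite cos_mulr2n cos2sin2; ring.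
have sin_sqr : sin (x / 2) ^+ 2 <= (x / 2) ^+ 2.
  by rewrite -real_normK ?num_real // -[(x / 2) ^+ 2]real_normK ?num_real //
    lerXn2r ?nnegrE ?norm_sin_le.
rewrite cosE addrAC subrr sub0r normrN ger0_norm;
  last by rewrite mulr_ge0 // sqr_ge0.
have -> : x ^+ 2 / 2 = 2 * (x / 2) ^+ 2 by field.
by rewrite ler_pM2l.
Qed.

Lemma norm_sin_sub_le x : `|x| <= 1 / 2 -> `|sin x - x| <= x ^+ 2.
Proof.
wlog x0 : x / 0 <= x.
  move=> W; have [/W//|/ltW x0 x_small] := leP 0 x.
  have := W (- x); rewrite oppr_ge0 normrN sqrrN sinN => /(_ x0 x_small).
  by rewrite -opprD normrN.
rewrite ger0_norm // => x_le.
have sin_sub_derive c :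
    c \in `]0, x[ -> is_derive c 1 (fun t => sin t - t) (cos c - 1).
  by move=> _; apply: is_deriveB.
have sin_sub_cont : {within `[0, x], continuous (fun t => sin t - t)}%classic.
  apply: continuous_subspaceT => c.
  by apply: continuousB; [exact: continuous_sin|exact: cvg_id].
have [c /andP[c0 cx]] := MVT_segment x0 sin_sub_derive sin_sub_cont.
rewrite sin0 !subr0 => ->; rewrite normrM (ger0_norm x0).
apply: le_trans (ler_wpM2r x0 (norm_cos_sub1_le c)) _.
have : c ^+ 2 <= x ^+ 2 by rewrite lerXn2r // ?nnegrE ltW.
nra.
Qed.

Lemma expR_near0_bounds x : `|x| <= 1 / 2 ->
  [/\ expR x <= 2, `|expR x - 1| <= 2 * `|x| & `|expR x - 1 - x| <= 2 * x ^+ 2].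
Proof.
move=> x_small.
have ge1Dx := expR_ge1Dx x.
have expRM1B_le1 : expR x * (1 - x) <= 1.
  have := expR_ge1Dx (- x); rewrite -(ler_pM2l (expR_gt0 x)) expRxMexpNx_1.
  by rewrite (addrC 1) addrC.
have := expR_gt0 x; set u := expR x in ge1Dx expRM1B_le1 *.
have [x0|x0] := leP 0 x; move: x_small.
- rewrite (ger0_norm x0) => x_small u0; have u2 : u <= 2 by nra.
  by split=> //; rewrite ger0_norm; nra.
- rewrite (ltr0_norm x0) => x_small u0; have u1 : u <= 1 by nra.
  by split; [lra|rewrite ler0_norm; nra|rewrite ger0_norm; nra].
Qed.

End RealTaylorBounds.

Section ComplexExponential.
Context {R : realType}.
Local Open Scope complex_scope.

Lemma cexpD (u v : R[i]) : cexp (u + v) = cexp u * cexp v.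
Proof.
case: u => a b; case: v => c d; rewrite /cexp /= expRD cosD sinD.
by apply/eqP; rewrite eq_complex /=; apply/andP; split; apply/eqP; ring.
Qed.

Lemma cexp0 : cexp (0 : R[i]) = 1.
Proof.
rewrite /cexp /= expR0 cos0 sin0.
by apply/eqP; rewrite eq_complex /=; apply/andP; split; apply/eqP; ring.
Qed.

Lemma norm_Re_cexp_sub_le (a b : R) : `|a| <= 1 / 2 -> `|b| <= 1 / 2 ->
  `|expR a * cos b - 1 - a| <= 2 * a ^+ 2 + b ^+ 2.
Proof.
move=> a_small b_small.
have [expR_le2 _ expR_le] := expR_near0_bounds _ a_small.
have cos_le := norm_cos_sub1_le b; have expR_ge0 := expR_ge0 a.
rewrite (_ : _ - 1 - a = expR a * (cos b - 1) + (expR a - 1 - a)); last by ring.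
apply: le_trans (ler_normD _ _) _; rewrite normrM (ger0_norm expR_ge0).
have : expR a * `|cos b - 1| <= 2 * (b ^+ 2 / 2).
  by apply: ler_pM.
lra.
Qed.

Lemma norm_Im_cexp_sub_le (a b : R) : `|a| <= 1 / 2 -> `|b| <= 1 / 2 ->
  `|expR a * sin b - b| <= a ^+ 2 + 3 * b ^+ 2.
Proof.
move=> a_small b_small.
have [expR_le2 expR_sub1_le _] := expR_near0_bounds _ a_small.
have sin_le := norm_sin_sub_le _ b_small; have expR_ge0 := expR_ge0 a.
rewrite (_ : _ - b = expR a * (sin b - b) + (expR a - 1) * b); last by ring.
apply: le_trans (ler_normD _ _) _; rewrite !normrM (ger0_norm expR_ge0).
have : expR a * `|sin b - b| <= 2 * b ^+ 2 by apply: ler_pM.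
have : `|expR a - 1| * `|b| <= 2 * `|a| * `|b| by rewrite ler_wpM2r.
have : 2 * `|a| * `|b| <= `|a| ^+ 2 + `|b| ^+ 2.
  by have := sqr_ge0 (`|a| - `|b|); rewrite sqrrB; lra.
rewrite !real_normK ?num_real //; lra.
Qed.

Lemma norm_cexp_sub_le (h : R[i]) : `|h| <= (1 / 2)%:C ->
  `|cexp h - 1 - h| <= 4 * `|h| ^+ 2.
Proof.
case: h => a b h_small; rewrite -add_Re2_Im2 /=.
have normC (x : R) : `|x%:C| = `|x|%:C.
  by rewrite normc_def /= (expr2 (0 : R)) mul0r addr0 sqrtr_sqr.
have sqr_le : a ^+ 2 + b ^+ 2 <= 1 / 4.
  move: h_small; rewrite normc_def lecR /= => h_small.
  rewrite -[_ + _]sqr_sqrtr ?addr_ge0 ?sqr_ge0 //.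
  by rewrite (_ : 1 / 4 = (1 / 2) ^+ 2) ?lerXn2r ?nnegrE ?sqrtr_ge0 //; field.
have small (x : R) : x ^+ 2 <= 1 / 4 -> `|x| <= 1 / 2.
  by rewrite -real_normK ?num_real //; have := normr_ge0 x; nra.
have a_small : `|a| <= 1 / 2 by apply: small; have := sqr_ge0 b; lra.
have b_small : `|b| <= 1 / 2 by apply: small; have := sqr_ge0 a; lra.
rewrite (_ : cexp _ - 1 - _ =
    (expR a * cos b - 1 - a)%:C + 'i * (expR a * sin b - b)%:C); last first.
  by apply/eqP; rewrite eq_complex /=; apply/andP; split; apply/eqP; ring.
apply: le_trans (ler_normD _ _) _.
rewrite normrM !normC (_ : `|'i| = 1 :> R[i]); last first.
  by rewrite normc_def /= (expr2 (0 : R)) mul0r add0r expr1n sqrtr1.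
rewrite mul1r -rmorphD (_ : 4 * _%:C = (4 * (a ^+ 2 + b ^+ 2))%:C) ?lecR;
  last by rewrite rmorphM /= rmorph_nat.
have := norm_Re_cexp_sub_le a b a_small b_small.
have := norm_Im_cexp_sub_le a b a_small b_small.
have := sqr_ge0 a; lra.
Qed.

End ComplexExponential.

Section NumFieldDerivatives.
Context {K : numFieldType}.

Lemma is_derive_sqr_bound (f : K -> K) (z d r c : K) : 0 < r -> 0 <= c ->
  (forall h, `|h| <= r -> `|f (h + z) - f z - h * d| <= c * `|h| ^+ 2) ->
  is_derive z 1 f d.
Proof.
move=> r0 c0 f_bound.
have quot_cvg :
    ((fun h => h^-1 *: ((f \o shift z) (h *: 1) - f z)) @ 0^' --> d)%classic.
  apply/cvgrPdist_le => eps eps0.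
  have eps_c0 : 0 < eps / (c + 1) by rewrite divr_gt0 // ltr_wpDl.
  near=> h.
  have h_neq0 : h != 0 by near: h; exact: nbhs_dnbhs_neq.
  have h_lt_r : `|h| < r by near: h; exact: dnbhs0_lt.
  have h_lt_eps : `|h| < eps / (c + 1) by near: h; exact: dnbhs0_lt.
  have h_gt0 : 0 < `|h| by rewrite normr_gt0.
  rewrite /= /shift /= -[h *: 1]/(h * 1) mulr1.
  have -> : d - h^-1 * (f (h + z) - f z) = - h^-1 * (f (h + z) - f z - h * d).
    by field.
  rewrite normrM normrN normfV ler_pdivrMl //.
  apply: le_trans (f_bound h (ltW h_lt_r)) _.
  rewrite expr2 mulrA [X in _ <= X]mulrC ler_wpM2r //.
  move: (ltW h_lt_eps); rewrite ler_pdivlMr ?ltr_wpDl // => /(le_trans _); apply.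
  by rewrite mulrC ler_wpM2l // lerDl.
have f_derivable : derivable f z 1 by apply/cvg_ex; exists d.
by split => //; exact: cvg_lim.
Unshelve. all: by end_near.
Qed.

Lemma is_derive_horner (p : {poly K}) (x : K) :
  is_derive x 1 (horner p) p^`().[x].
Proof.
elim/poly_ind: p => [|p c IH].
  rewrite deriv0 horner0 (_ : horner 0 = cst 0); first exact: is_derive_cst.
  by apply: funext => y; rewrite horner0.
rewrite (_ : horner _ = horner p * id + cst c); last first.
  by apply: funext => y; rewrite /= !hornerE.
apply: is_derive_eq.
rewrite derivD derivC addr0 derivM derivX !hornerE /=.
by change (p.[x] * 1 + x * p^`().[x] = p^`().[x] * x + p.[x]); ring.
Qed.

End NumFieldDerivatives.

Section Quasipolynomial.
Context {R : realType}.
Local Open Scope complex_scope.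
(* Viewing R[i] through its numFieldType structure is what lets is_derive and
   derive1n find the normed-module structure of the complex numbers. *)
Local Notation C := (Num.NumField.sort (R[i] : numFieldType)).
Implicit Types p q : {poly C}.

Definition cexpN (z : C) : C := cexp (- z).

Lemma is_derive_cexpN (z : C) : is_derive z 1 cexpN (- cexpN z).
Proof.
apply: (@is_derive_sqr_bound _ _ _ _ (1 / 2)%:C (4 * `|cexpN z|)).
- by rewrite ltcR divr_gt0.
- by rewrite mulr_ge0 // ler0n.
move=> h h_small.
have -> : cexpN (h + z) - cexpN z - h * - cexpN z =
    cexpN z * (cexp (- h) - 1 - (- h)).
  by rewrite /cexpN opprD cexpD; ring.
rewrite normrM mulrAC [leLHS]mulrC ler_wpM2r //.
by rewrite -[`|h|]normrN; apply: norm_cexp_sub_le; rewrite normrN.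
Qed.

Definition quasipoly p q (z : C) : C := p.[z] + cexpN z * q.[z].

Definition deriv_expN q := q^`() - q.

Lemma is_derive_quasipoly p q (z : C) :
  is_derive z 1 (quasipoly p q) (quasipoly p^`() (deriv_expN q) z).
Proof.
have -> : quasipoly p q = horner p + cexpN * horner q by [].
apply: (is_derive_eq (is_deriveD (is_derive_horner p z)
  (is_deriveM (is_derive_cexpN z) (is_derive_horner q z)))).
rewrite /quasipoly /deriv_expN hornerD hornerN.
by change (p^`().[z] + (cexpN z * q^`().[z] + q.[z] * - cexpN z) =
  p^`().[z] + cexpN z * (q^`().[z] - q.[z])); ring.
Qed.

Lemma derive1n_quasipoly k p q :
  derive1n k (quasipoly p q) = quasipoly p^`(k) (iter k deriv_expN q).
Proof.
elim: k => [|k IH]; first by rewrite derive1n0 derivn0.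
rewrite derive1nS IH derivnS iterS; apply/funext => z.
rewrite derive1E.
by have [_ ->] := is_derive_quasipoly p^`(k) (iter k deriv_expN q) z.
Qed.

Lemma horner0_derivn_iter_deriv_expN k q i :
  ((iter k deriv_expN q)^`(i)).[0] = fwd_diffn k (fun j => (q^`(j)).[0]) i.
Proof.
elim: k i => [//|k IH] i.
by rewrite iterS fwd_diffnS -!IH /deriv_expN derivnB -derivSn hornerD hornerN.
Qed.

Lemma derive1n_quasipoly0 k p q : derive1n k (quasipoly p q) 0 =
  (k`!)%:R * p`_k + fwd_diffn k (fun j => (j`!)%:R * q`_j) 0.
Proof.
have horner0_derivn r j : (r^`(j)).[0] = (j`!)%:R * r`_j.
  by rewrite horner_coef0 coef_derivn addn0 ffactnn mulr_natl.
rewrite derive1n_quasipoly /quasipoly /cexpN oppr0 cexp0 mul1r horner0_derivn.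
by rewrite -[(iter k _ q).[0]]/(((iter k deriv_expN q)^`(0)).[0])
  horner0_derivn_iter_deriv_expN; under eq_fun do rewrite horner0_derivn.
Qed.

End Quasipolynomial.

Lemma rmorph_bstar {F G : numFieldType} (f : {rmorphism F -> G}) n k :
  f (bstar n k) = bstar n k.
Proof. by rewrite /bstar !rmorphM rmorphXn rmorphN1 fmorphV !rmorph_nat. Qed.

Lemma rmorph_betastar {F G : numFieldType} (f : {rmorphism F -> G}) n k :
  f (betastar n k) = betastar n k.
Proof.
by rewrite /betastar !rmorphM rmorphXn rmorphN1 fmorphV !rmorphM !rmorph_nat.
Qed.

Section DeltatCoefficients.
Context {R : realType}.
Local Open Scope complex_scope.
Local Notation C := (Num.NumField.sort (R[i] : numFieldType)).
Variables (n : nat) (b beta : nat -> R).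

Let P : {poly C} := 'X^n + \poly_(k < n) (b k)%:C.
Let Q : {poly C} := \poly_(k < n) (beta k)%:C.

Lemma Deltat_quasipoly : Deltat n b beta = quasipoly P Q.
Proof.
apply/funext => z.
by rewrite /Deltat /quasipoly /cexpN hornerD hornerXn !horner_poly.
Qed.

Lemma derive1n_Deltat0 k : derive1n k (Deltat n b beta : C -> C) 0 =
  (k`!)%:R * P`_k + fwd_diffn k (fun j => (j`!)%:R * Q`_j) 0.
Proof. by rewrite Deltat_quasipoly derive1n_quasipoly0. Qed.

Lemma Deltat_root_iff : (0 < n)%N ->
  root_of_mult (Deltat n b beta : C -> C) 0 (2 * n) <->
  forall k, (k < n)%N -> P`_k = bstar n k /\ Q`_k = betastar n k.
Proof.
move=> n_gt0; rewrite -(maxmult_system_iff _ n_gt0).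
- by split=> roots m lt_m2n; have := roots m lt_m2n; rewrite derive1n_Deltat0.
- by move=> j le_nj; rewrite coef_poly ltnNge le_nj.
- by move=> m le_nm; rewrite coefD coefXn coef_poly ltnNge le_nm addr0.
Qed.

Lemma Deltat_coefs_iff k : (k < n)%N ->
  (P`_k = bstar n k /\ Q`_k = betastar n k) <->
  (b k = bstar n k /\ beta k = betastar n k).
Proof.
move=> lt_kn; rewrite coefD coefXn coef_poly lt_kn (ltn_eqF lt_kn) add0r.
rewrite /Q coef_poly lt_kn -(rmorph_bstar (real_complex R)).
rewrite -(rmorph_betastar (real_complex R)).
by split=> -[eq_b eq_beta]; split;
  by [apply: complexI | rewrite eq_b | rewrite eq_beta].
Qed.

End DeltatCoefficients.

Theorem lemma4p3 (R : realType) (n : nat) (b beta : nat -> R) :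
  (0 < n)%N ->
  (root_of_mult (K := R[i]) (Deltat n b beta) 0 (2 * n) <->
   (forall k : nat, (k < n)%N ->
      b k = (-1) ^+ (n - k) * ((n`!)%:R / (k`!)%:R) * ('C(2 * n - k - 1, n - 1))%:R
      /\ beta k = (-1) ^+ (n - 1) * ((2 * n - k - 1)`!)%:R
                  / ((k`!)%:R * ((n - k - 1)`!)%:R))).
Proof.
move=> n_gt0; rewrite Deltat_root_iff //.
by split=> coefs k lt_kn; apply/(Deltat_coefs_iff n b beta k lt_kn); exact: coefs.
Qed.
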